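(* Let $X$ be a Tychonoff topological space which has a complete sequence $(\mathcal D_n)_{n\in\mathbb N}$ of covers such that each $\mathcal D_n$ is countable, disjoint, and consists of $F_\sigma$ subsets of $X$. Then $X$ is absolutely $F_{\sigma\delta}$, i.e. $X$ is an $F_{\sigma\delta}$ subset of $cX$ for every compactification $cX$ of $X$.
   Context: A filter on $X$ is a nonempty family of subsets of $X$ closed under supersets and finite intersections and not containing $\emptyset$. A point $x\in X$ is an accumulation point of a filter $\mathcal F$ if every neighborhood of $x$ meets every element of $\mathcal F$. A sequence $(\mathcal F_n)_{n\in\mathbb N}$ of covers of $X$ is complete if every filter on $X$ which intersects each $\mathcal F_n$ (i.e. contains some element of $\mathcal F_n$ for each $n$) has an accumulation point in $X$. A cover is disjoint if its elements are pairwise disjoint, countable if it has countably many elements, and $F_\sigma$ if its elements are $F_\sigma$ subsets of $X$. A compactification of $X$ is a compact (Hausdorff) space $cX$ together with a homeomorphic embedding of $X$ onto a dense subspace of $cX$; we identify $X$ with its image. *)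

From HB Require Import structures.
From mathcomp Require Import all_boot all_order all_algebra.
From mathcomp Require Import all_classical all_reals all_analysis.
From mathcomp Require Import Rstruct Rstruct_topology borel_hierarchy.
Set Implicit Arguments.
Unset Strict Implicit.
Unset Printing Implicit Defensive.
Local Open Scope classical_set_scope.
Local Open Scope ring_scope.

Definition tychonoff_space (X : topologicalType) : Prop :=
  accessible_space X /\
  forall (x : X) (B : set X), closed B -> ~ B x ->
    exists f : X -> Rdefinitions.R, continuous f /\ f x = 0%R /\ (forall y, B y -> f y = 1%R).

Definition cover_of (X : Type) (D : set (set X)) : Prop :=
  \bigcup_(A in D) A = [set: X].

Definition disjoint_family (X : Type) (D : set (set X)) : Prop :=
  trivIset D (fun A : set X => A).

Definition Fsigma_family (X : topologicalType) (D : set (set X)) : Prop :=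
  forall A, D A -> Fsigma A.

Definition complete_sequence (X : topologicalType) (D : nat -> set (set X)) : Prop :=
  (forall n, cover_of (D n)) /\
  forall F : set_system X, ProperFilter F ->
    (forall n, exists A, D n A /\ F A) -> exists x : X, cluster F x.

Definition embedding (X Y : topologicalType) (f : X -> Y) : Prop :=
  [/\ injective f, continuous f &
      forall U : set X, open U -> exists V : set Y, open V /\ f @` U = V `&` range f].

Definition compactification (X K : topologicalType) (f : X -> K) : Prop :=
  [/\ compact [set: K], hausdorff_space K, embedding f & dense (range f)].

Definition Fsigmadelta (T : topologicalType) (S : set T) : Prop :=
  exists2 G : (set T)^nat, (forall n, Fsigma (G n)) & S = \bigcap_n G n.

Definition absolutely_Fsigmadelta (X : topologicalType) : Prop :=
  forall (K : topologicalType) (f : X -> K), compactification f -> Fsigmadelta (range f).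

From mathcomp Require Import all_boot all_order all_algebra.
From mathcomp Require Import all_classical all_reals all_analysis.
From mathcomp Require Import borel_hierarchy.
Set Implicit Arguments.
Unset Strict Implicit.
Unset Printing Implicit Defensive.
Local Open Scope classical_set_scope.

(* Splitting the F_sigma members of D_n into closed sets and intersecting
   over the first n levels gives countable closed covers P_n of X, with P_(n+1)
   refining P_n and each member of P_(n+1) inside a single member of D_n.
   Let f : X -> K be a compactification.  If pieces S_n ⊆ P_n decrease and
   pairwise meet, the union of S_(n+1) lies in one member of D_n, so by
   completeness every point of ⋂_n cl f(⋃ S_n) is in f(X).  Taking for S_n the
   pieces containing a point x, compactness of K shows that a closed J ⊆ K
   missing f(X) misses cl f(P) for some piece P ∋ x.  Hence f(X) is the
   intersection of the F_sigma sets ⋃_(P ∈ P_n) cl f(P) and, for disjoint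
   P, P' ∈ P_n, ⋃ {cl f(Q) | Q a piece, cl f(Q) ∩ cl f(P) ∩ cl f(P') = ∅}:
   for y in all of them, the pieces P with y ∈ cl f(P) pairwise meet. *)

Lemma countable_image (T U : Type) (g : T -> U) (A : set T) :
  countable A -> countable (g @` A).
Proof. exact: card_le_trans (card_image_le g A). Qed.

Lemma countableU (T : Type) (A B : set T) :
  countable A -> countable B -> countable (A `|` B).
Proof.
move=> cA cB.
have -> : A `|` B = \bigcup_(b in [set: bool]) (if b then A else B).
  apply/seteqP; split => [x [Ax|Bx]|x [[] _ ?]];
    by [exists true|exists false|left|right].
by apply: bigcup_countable => // -[].
Qed.

Lemma countable_range_nat (T : Type) (A : set T) :
  countable A -> A = set0 \/ exists g : nat -> T, A = range g.
Proof. by move=> /pfcard_geP[->|/surjfunPex[g ->]]; [left|right; exists g]. Qed.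

Lemma Fsigma_bigcup_closed (T : topologicalType) (I : Type) (D : set I)
    (F : I -> set T) :
  countable D -> (forall i, D i -> closed (F i)) -> Fsigma (\bigcup_(i in D) F i).
Proof.
move=> /countable_range_nat[->|[g ->]] cF.
  by rewrite bigcup_set0; apply/closed_Fsigma/closed0.
by rewrite bigcup_image; exists (F \o g) => // n; apply: cF; exists n.
Qed.

Lemma Fsigmadelta_bigcap (T : topologicalType) (I : Type) (D : set I)
    (F : I -> set T) :
  countable D -> (forall i, D i -> Fsigma (F i)) -> Fsigmadelta (\bigcap_(i in D) F i).
Proof.
move=> /countable_range_nat[->|[g ->]] FF.
  rewrite bigcap_set0; exists (fun=> setT); last by rewrite bigcap_const.
  by move=> _; apply/closed_Fsigma/closedT.
by rewrite bigcap_image; exists (F \o g) => // n; apply: FF; exists n.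
Qed.

Lemma nonincreasing_sets (T : Type) (F : nat -> set T) :
  (forall n, F n.+1 `<=` F n) -> {homo F : i j / (i <= j)%N >-> j `<=` i}.
Proof.
move=> Fnest; apply: homo_leq => // [A t //|A B C BA CB].
exact: subset_trans CB BA.
Qed.

Lemma refines_bigcup_subset (T : Type) (A B : set (set T)) :
  (forall Q, A Q -> exists2 R, B R & Q `<=` R) ->
  \bigcup_(Q in A) Q `<=` \bigcup_(R in B) R.
Proof. by move=> AB x [Q /AB[R BR QR] Qx]; exists R => //; exact: QR. Qed.

Lemma cover_ofP (T : Type) (D : set (set T)) :
  cover_of D -> forall x, exists2 A, D A & A x.
Proof. by move=> DT x; have : [set: T] x by []; rewrite -DT => -[A]; exists A. Qed.

Lemma compact_nested_closed (T : topologicalType) (F : nat -> set T) :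
  compact [set: T] -> (forall n, closed (F n)) -> (forall n, F n !=set0) ->
  (forall n, F n.+1 `<=` F n) -> \bigcap_n F n !=set0.
Proof.
move=> cT cF F0 Fnest.
have Fmon := nonincreasing_sets Fnest.
pose G := filter_from [set: nat] F.
have GF : ProperFilter G.
  apply: filter_from_proper => [|n _]; last exact: F0.
  apply: filter_from_filter => [|i j _ _]; first by exists 0%N.
  exists (maxn i j) => // x Fx.
  by split; apply: Fmon Fx; [exact: leq_maxl|exact: leq_maxr].
have [z [_ Gz]] := cT G GF (filterT).
exists z => n _; rewrite (closure_id (F n)).1 //.
by move: Gz; rewrite clusterE; apply; exists n.
Qed.

Lemma embedding_preimage_closure_image (X K : topologicalType) (f : X -> K)
    (P : set X) :
  embedding f -> closed P -> f @^-1` closure (f @` P) `<=` P.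
Proof.
case=> finj _ fo cP x cx; apply: contrapT => nPx.
have [V [oV eV]] := fo (~` P) (closed_openC cP).
have [Vfx _] : (V `&` range f) (f x) by rewrite -eV; exists x.
have [_ [[p Pp <-] Vfp]] := cx V (open_nbhs_nbhs (conj oV Vfx)).
have : (f @` (~` P)) (f p) by rewrite eV; split => //; exists p.
by case=> u nPu /finj eu; apply: nPu; rewrite eu.
Qed.

Section Pieces.
Variable X : topologicalType.

Lemma Fsigma_cover_closed_refinement (D : set (set X)) :
  countable D -> Fsigma_family D -> cover_of D ->
  exists C : set (set X), [/\ countable C, forall Q, C Q -> closed Q,
    cover_of C & forall Q, C Q -> exists2 A, D A & Q `<=` A].
Proof.
move=> cD FD covD.
have /choice[dec decE] : forall A : set X, exists F : (set X)^nat,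
    D A -> (forall i, closed (F i)) /\ A = \bigcup_i F i.
  move=> A; have [/FD[F cF eA]|nDA] := pselect (D A); first by exists F.
  by exists (fun=> set0) => /nDA.
exists (\bigcup_(A in D) range (dec A)); split.
- by apply: bigcup_countable => // A _; apply: countable_image; exact: countableP.
- by move=> _ [A DA [i _ <-]]; exact: (decE A DA).1.
- apply/seteqP; split => // x _; have [A DA] := cover_ofP covD x.
  rewrite {1}(decE A DA).2 => -[i _ dix].
  by exists (dec A i) => //; exists A => //; exists i.
- move=> _ [A DA [i _ <-]]; exists A => //.
  by rewrite [X in _ `<=` X](decE A DA).2; exact: bigcup_sup.
Qed.

Fixpoint pieces (C : nat -> set (set X)) (n : nat) : set (set X) :=
  if n is m.+1 then [set P `&` Q | P in pieces C m & Q in C m] else [set setT].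

Variable C : nat -> set (set X).

Lemma countable_pieces : (forall n, countable (C n)) -> forall n, countable (pieces C n).
Proof.
move=> cC; elim => [|n IH] /=; first exact: countable1.
by rewrite image2E; apply: countable_image; exact: countableX.
Qed.

Lemma closed_pieces : (forall n Q, C n Q -> closed Q) ->
  forall n P, pieces C n P -> closed P.
Proof.
move=> cC; elim => [|n IH] P /=; first by move=> ->; exact: closedT.
by move=> [Q PQ [R CR <-]]; apply: closedI; [exact: IH|exact: cC CR].
Qed.

Lemma cover_pieces : (forall n, cover_of (C n)) -> forall n, cover_of (pieces C n).
Proof.
move=> covC n; apply/seteqP; split => // x _; elim: n => [|n [P PP Px]] /=.
  by exists setT.
have [Q CQ Qx] := cover_ofP (covC n) x.
by exists (P `&` Q) => //; exists P => //; exists Q.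
Qed.

Lemma pieces_nested n P : pieces C n.+1 P -> exists2 Q, pieces C n Q & P `<=` Q.
Proof. by move=> [Q PQ [R CR <-]]; exists Q => // w []. Qed.

Lemma pieces_refine (D : nat -> set (set X)) :
  (forall n Q, C n Q -> exists2 A, D n A & Q `<=` A) ->
  forall n P, pieces C n.+1 P -> exists2 A, D n A & P `<=` A.
Proof.
move=> CD n _ [Q PQ [R CR <-]]; have [A DA RA] := CD _ _ CR.
by exists A => // w [_ /RA].
Qed.

End Pieces.

Section NestedClosures.
Variables (X K : topologicalType) (f : X -> K) (D : nat -> set (set X)).
Hypotheses (cD : complete_sequence D) (hK : hausdorff_space K) (fc : continuous f).

Lemma bigcap_closure_image_subset_range (T : nat -> set X) :
  (forall n, T n.+1 `<=` T n) -> (forall n, exists2 A, D n A & T n.+1 `<=` A) ->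
  \bigcap_n closure (f @` T n) `<=` range f.
Proof.
move=> Tnest TD z zT.
have Tmon := nonincreasing_sets Tnest.
pose G := filter_from [set i : nat * set K | nbhs z i.2]
  (fun i => T i.1 `&` f @^-1` i.2).
have GF : ProperFilter G.
  apply: filter_from_proper => [|[n V] /= zV]; last first.
    by have [_ [[w Tw <-] Vfw]] := zT n I V zV; exists w.
  apply: filter_from_filter => [|[i V] [j W] /= zV zW].
    by exists (0%N, setT); apply: filterT.
  exists (maxn i j, V `&` W); first exact: filterI.
  move=> w [Tw [Vw Ww]]; split; split => //; apply: Tmon Tw.
    exact: leq_maxl.
  exact: leq_maxr.
have [n|x Gx] := cD.2 G GF.
  have [A DA TA] := TD n; exists A; split => //.
  by exists (n.+1, setT) => [|w [/TA]] //=; exact: filterT.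
exists x => //; apply: hK => A B xA zB.
have GB : G (T 0%N `&` f @^-1` B) by exists (0%N, B).
by have [w [[_ Bw] Aw]] := Gx _ _ GB (fc xA); exists (f w).
Qed.

Hypothesis disjD : forall n, disjoint_family (D n).
Variable P : nat -> set (set X).
Hypothesis Prefine : forall n Q, P n.+1 Q -> exists2 A, D n A & Q `<=` A.

Lemma bigcap_closure_pieces_subset_range (S : nat -> set (set X)) :
  (forall n, S n `<=` P n) -> (forall n, S n !=set0) ->
  (forall n Q, S n.+1 Q -> exists2 R, S n R & Q `<=` R) ->
  (forall n Q Q', S n Q -> S n Q' -> Q `&` Q' !=set0) ->
  \bigcap_n closure (f @` \bigcup_(Q in S n) Q) `<=` range f.
Proof.
move=> SP S0 Snest Smeet; apply: bigcap_closure_image_subset_range.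
  by move=> n; apply: refines_bigcup_subset; exact: Snest.
move=> n; have [Q0 SQ0] := S0 n.+1; have [A DA Q0A] := Prefine (SP _ _ SQ0).
exists A => // w [Q SQ Qw]; have [A' DA' QA'] := Prefine (SP _ _ SQ).
have [u [Q0u Qu]] := Smeet _ _ _ SQ0 SQ.
by rewrite (disjD DA DA') //; [exact: QA'|exists u; split; [exact: Q0A|exact: QA']].
Qed.

End NestedClosures.

Section Approximants.
Variables (X K : topologicalType) (f : X -> K) (D P : nat -> set (set X)).
Hypotheses (cD : complete_sequence D) (disjD : forall n, disjoint_family (D n)).
Hypotheses (cK : compact [set: K]) (hK : hausdorff_space K) (emb : embedding f).
Hypotheses (Pcount : forall n, countable (P n))
  (Pclosed : forall n Q, P n Q -> closed Q) (Pcover : forall n, cover_of (P n))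
  (Pnest : forall n Q, P n.+1 Q -> exists2 R, P n R & Q `<=` R)
  (Prefine : forall n Q, P n.+1 Q -> exists2 A, D n A & Q `<=` A).

Let fc : continuous f. Proof. by case: emb. Qed.

Definition closure_images (S : set (set X)) : set K :=
  \bigcup_(Q in S) closure (f @` Q).

Definition separator (J : set K) : set K :=
  closure_images [set Q | (\bigcup_n P n) Q /\ closure (f @` Q) `&` J = set0].

Definition pair_separator (Q Q' : set X) : set K :=
  [set z | Q `&` Q' = set0 -> separator (closure (f @` Q) `&` closure (f @` Q')) z].

Definition range_approximants : set (set K) :=
  [set closure_images (P n) | n in [set: nat]] `|`
  \bigcup_n [set pair_separator Q Q' | Q in P n & Q' in P n].

Lemma piece_closure_image_separates (J : set K) :
  closed J -> (forall x, ~ J (f x)) ->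
  forall x, exists n Q, [/\ P n Q, Q x & closure (f @` Q) `&` J = set0].
Proof.
move=> cJ Jf x; apply: contrapT => noQ.
pose S n := [set Q | P n Q /\ Q x].
have S0 n : S n !=set0 by have [Q PQ Qx] := cover_ofP (Pcover n) x; exists Q.
have Snest n Q : S n.+1 Q -> exists2 R, S n R & Q `<=` R.
  by move=> [/Pnest[R PR QR] Qx]; exists R => //; split => //; exact: QR.
pose T n := closure (f @` \bigcup_(Q in S n) Q).
have [z Tz] : \bigcap_n (T n `&` J) !=set0.
  apply: compact_nested_closed => // [n|n|n].
  - by apply: closedI => //; exact: closed_closure.
  - have [Q [PQ Qx]] := S0 n.
    have /set0P[z [Qz Jz]] : closure (f @` Q) `&` J != set0.
      by apply/eqP => QJ; apply: noQ; exists n, Q.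
    exists z; split => //; apply: closureS Qz; apply: image_subset.
    exact: bigcup_sup.
  - move=> z [Tz Jz]; split => //; apply: closureS Tz; apply: image_subset.
    by apply: refines_bigcup_subset; exact: Snest.
have SP n : S n `<=` P n by move=> Q [].
have Smeet n Q Q' : S n Q -> S n Q' -> Q `&` Q' !=set0.
  by move=> [_ Qx] [_ Q'x]; exists x.
have [x' _ fx'z] := bigcap_closure_pieces_subset_range cD hK fc disjD Prefine
  SP S0 Snest Smeet (fun n _ => (Tz n I).1).
by apply: (Jf x'); rewrite fx'z; exact: (Tz 0%N I).2.
Qed.

Lemma range_subset_approximants : range f `<=` \bigcap_(B in range_approximants) B.
Proof.
move=> _ [x _ <-] B [[n _ <-]|[n _ [Q PQ [Q' PQ' <-]]]].
  have [Q PQ Qx] := cover_ofP (Pcover n) x.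
  by exists Q => //; apply: subset_closure; exists x.
move=> QQ'; set J := closure (f @` Q) `&` closure (f @` Q').
have cJ : closed J by apply: closedI; exact: closed_closure.
have Jf x' : ~ J (f x').
  move=> [/(embedding_preimage_closure_image emb (Pclosed PQ)) Qx'
          /(embedding_preimage_closure_image emb (Pclosed PQ')) Q'x'].
  have : (Q `&` Q') x' by [].
  by rewrite QQ'.
have [m [R [PR Rx RJ]]] := piece_closure_image_separates cJ Jf x.
by exists R; [split => //; exists m|apply: subset_closure; exists x].
Qed.

Lemma approximants_subset_range : \bigcap_(B in range_approximants) B `<=` range f.
Proof.
move=> y yB; pose S n := [set Q | P n Q /\ closure (f @` Q) y].
have SP n : S n `<=` P n by move=> Q [].
have S0 n : S n !=set0.
  have [Q PQ yQ] : closure_images (P n) y by apply: yB; left; exists n.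
  by exists Q.
have Snest n Q : S n.+1 Q -> exists2 R, S n R & Q `<=` R.
  move=> [/Pnest[R PR QR] yQ]; exists R => //; split => //.
  by apply: closureS yQ; exact: image_subset.
have Smeet n Q Q' : S n Q -> S n Q' -> Q `&` Q' !=set0.
  move=> [PQ yQ] [PQ' yQ']; apply/set0P/eqP => QQ'.
  have yQQ' : pair_separator Q Q' y.
    by apply: yB; right; exists n => //; exists Q => //; exists Q'.
  have [R [_ RJ] yR] := yQQ' QQ'.
  have : (closure (f @` R) `&` (closure (f @` Q) `&` closure (f @` Q'))) y by [].
  by rewrite RJ.
apply: (bigcap_closure_pieces_subset_range cD hK fc disjD Prefine SP S0 Snest Smeet).
move=> n _; have [Q SQ] := S0 n.
by apply: closureS SQ.2; apply: image_subset; exact: bigcup_sup.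
Qed.

Lemma countable_range_approximants : countable range_approximants.
Proof.
apply: countableU; first by apply: countable_image; exact: countableP.
apply: bigcup_countable => // n _.
by rewrite image2E; apply: countable_image; exact: countableX (Pcount n) (Pcount n).
Qed.

Lemma Fsigma_closure_images (S : set (set X)) : countable S -> Fsigma (closure_images S).
Proof. by move=> cS; apply: Fsigma_bigcup_closed => // Q _; exact: closed_closure. Qed.

Lemma Fsigma_pair_separator (Q Q' : set X) : Fsigma (pair_separator Q Q').
Proof.
have [QQ'|QQ'] := pselect (Q `&` Q' = set0); last first.
  rewrite (_ : pair_separator _ _ = setT); first exact/closed_Fsigma/closedT.
  by apply/seteqP; split => // z _ /QQ'.
rewrite (_ : pair_separator _ _ = separator (closure (f @` Q) `&` closure (f @` Q'))).
  apply: Fsigma_closure_images; apply: (@sub_countable _ _ _ (\bigcup_n P n)).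
    by apply: subset_card_le => R [].
  exact: bigcup_countable (fun n _ => Pcount n).
by apply/seteqP; split => z; [move/(_ QQ')|move=> ? _].
Qed.

Lemma Fsigmadelta_range : Fsigmadelta (range f).
Proof.
rewrite (_ : range f = \bigcap_(B in range_approximants) B); last first.
  exact/seteqP/(conj range_subset_approximants approximants_subset_range).
apply: Fsigmadelta_bigcap; first exact: countable_range_approximants.
move=> _ [[n _ <-]|[n _ [Q _ [Q' _ <-]]]]; last exact: Fsigma_pair_separator.
exact/Fsigma_closure_images/Pcount.
Qed.

End Approximants.

Theorem proposition4p5 (X : topologicalType) :
  tychonoff_space X ->
  (exists D : nat -> set (set X),
      complete_sequence D /\
      (forall n, [/\ countable (D n), disjoint_family (D n) & Fsigma_family (D n)])) ->
  absolutely_Fsigmadelta X.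
Proof.
move=> _ [D [cD hD]] K f [cK hK emb _].
have /choice[C hC] := fun n =>
  let: And3 cDn _ FDn := hD n in Fsigma_cover_closed_refinement cDn FDn (cD.1 n).
apply: (@Fsigmadelta_range X K f D (pieces C)) => //.
- by move=> n; have [] := hD n.
- by apply: countable_pieces => n; have [] := hC n.
- by apply: closed_pieces => n; have [] := hC n.
- by apply: cover_pieces => n; have [] := hC n.
- exact: pieces_nested.
- by apply: pieces_refine => n; have [] := hC n.
Qed.
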